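(* Let $n\ge 1$ and $\pi\in S_n$. Then $\pi\in\mathcal C_n(321)$ if and only if $\hat\pi_1=n$ and $\hat\pi$ avoids each of the five vincular patterns $\underline{32}\,\underline{41}$, $\underline{14}\,\underline{23}$, $\underline{41}\,\underline{32}$, $\underline{23}\,\underline{14}$, $\underline{23}\,\underline{1}$. Equivalently, $$\mathcal C_n(321)=\theta^{-1}\big(S_{n,n}(\underline{32}\,\underline{41},\ \underline{14}\,\underline{23},\ \underline{41}\,\underline{32},\ \underline{23}\,\underline{14},\ \underline{23}\,\underline{1})\big),$$ where $S_{n,n}(\dots)$ is the set of permutations $w\in S_n$ with $w_1=n$ avoiding all listed patterns.
   Context: Permutations of $[n]=\{1,\dots,n\}$ are written in one-line notation $\pi=\pi_1\cdots\pi_n$ with $\pi_i=\pi(i)$. A permutation contains $321$ if there are $i<j<k$ with $\pi_i>\pi_j>\pi_k$, and avoids $321$ otherwise. $\mathcal C_n$ is the set of cyclic permutations of $[n]$ (cycle decomposition is a single $n$-cycle), and $\mathcal C_n(321)$ is the set of those avoiding $321$. The standard cycle notation of $\pi$ writes each cycle with its largest element first, as $(m,\pi(m),\pi^2(m),\dots)$, and lists the cycles in increasing order of their largest elements. The fundamental bijection $\theta:S_n\to S_n$ sends $\pi$ to the permutation whose one-line notation is obtained by erasing the parentheses from the standard cycle notation of $\pi$; write $\hat\pi=\theta(\pi)$. (Example: $\pi=964572813=(6,2)(9,3,4,5,7,8,1)$, so $\hat\pi=629345781$.) Vincular patterns: for a sequence $w=w_1\cdots w_N$ of distinct integers, - $w$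 contains $\underline{32}\,\underline{41}$ if there are $i,j$ with $i+2\le j\le N-1$ and $w_{j+1}<w_{i+1}<w_i<w_j$; - $w$ contains $\underline{14}\,\underline{23}$ if there are such $i,j$ with $w_i<w_j<w_{j+1}<w_{i+1}$; - $w$ contains $\underline{41}\,\underline{32}$ if there are such $i,j$ with $w_{i+1}<w_{j+1}<w_j<w_i$; - $w$ contains $\underline{23}\,\underline{14}$ if there are such $i,j$ with $w_j<w_i<w_{i+1}<w_{j+1}$; - $w$ contains $\underline{23}\,\underline{1}$ if there is $i$ with $i+1\le N-1$ and $w_N<w_i<w_{i+1}$ (the ''1'' must be the last entry); - $w$ contains $\underline{1}\,\underline{32}$ if there is $j$ with $2\le j\le N-1$ and $w_1<w_{j+1}<w_j$ (the ''1'' must be the first entry). $w$ avoids a pattern if it does not contain it. *)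

(* Permutations of [n] are modelled as {perm 'I_n} (values 0..n-1);
   one-line notations are produced as seq nat with values shifted by +1, i.e. in 1..n. *)
From mathcomp Require Import all_boot all_order all_fingroup.
Set Implicit Arguments. Unset Strict Implicit. Unset Printing Implicit Defensive.

Definition oneline n (s : {perm 'I_n}) : seq nat :=
  [seq (val (s i)).+1 | i <- enum 'I_n].

Definition cyclic_perm n (s : {perm 'I_n}) : Prop := #|porbits s| = 1.

Definition contains321 (w : seq nat) : Prop :=
  exists i j k, [/\ i < j, j < k, k < size w &
    nth 0 w k < nth 0 w j < nth 0 w i].

Definition cycle_max n (s : {perm 'I_n}) (m : 'I_n) : bool :=
  [forall j : 'I_n, fconnect s m j ==> (val j <= val m)].

Definition cycle_of n (s : {perm 'I_n}) (m : 'I_n) : seq 'I_n :=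
  traject s m (fingraph.order s m).

(* fundamental bijection: erase parentheses of the standard cycle notation
   (cycles written from their maximum, listed by increasing maxima);
   values shifted to 1..n *)
Definition hat n (s : {perm 'I_n}) : seq nat :=
  flatten [seq [seq (val x).+1 | x <- cycle_of s m]
          | m <- enum 'I_n & cycle_max s m].

(* vincular patterns, 0-based indices: positions i, i+1, j, j+1 with i+2 <= j, j+1 <= N-1 *)
Definition contains_vinc (P : nat -> nat -> nat -> nat -> Prop) (w : seq nat) : Prop :=
  exists i j, [/\ i.+2 <= j, j.+1 < size w &
    P (nth 0 w i) (nth 0 w i.+1) (nth 0 w j) (nth 0 w j.+1)].

Definition contains_3241 := contains_vinc (fun a b c d => d < b /\ b < a /\ a < c).
Definition contains_1423 := contains_vinc (fun a b c d => a < c /\ c < d /\ d < b).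
Definition contains_4132 := contains_vinc (fun a b c d => b < d /\ d < c /\ c < a).
Definition contains_2314 := contains_vinc (fun a b c d => c < a /\ a < b /\ b < d).

Definition contains_231 (w : seq nat) : Prop :=
  exists i, i.+2 < size w /\ nth 0 w (size w).-1 < nth 0 w i < nth 0 w i.+1.

From mathcomp Require Import all_boot all_order all_fingroup zify.
Set Implicit Arguments. Unset Strict Implicit. Unset Printing Implicit Defensive.

(* For a cyclic permutation [s] of [0..n], [hat s] is the cycle of [s] read from
   [n], so its adjacent entries are exactly the arcs [(x, s x)] with [s x != n]; the
   remaining arc [s^-1 n -> n] wraps around from the last entry to the first.
   A permutation contains 321 with a non-fixed middle entry iff it has two
   excedances [x < y] with [s y < s x] or two deficiencies with the same property.
   Two such deficiency arcs show up in [hat s] as 32-41 or 41-32, depending on which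
   comes first; two such excedance arcs as 14-23 or 23-14, or as 23-1 when one of
   them is the wrap-around arc. Conversely, since cycles are listed by increasing
   maxima, [hat s] starts with [n] only if [s] has a single cycle, and then no
   fixed point can be the middle of a 321. *)

Lemma fconnect_porbit (T : finType) (s : {perm T}) x y :
  fconnect s x y = (y \in porbit s x).
Proof.
apply/idP/porbitP => [xy | [i ->]]; last by rewrite permX fconnect_iter.
by exists (findex s x y); rewrite permX iter_findex.
Qed.

Lemma cyclic_permP n (s : {perm 'I_n}) (a : 'I_n) :
  cyclic_perm s <-> forall x, fconnect s a x.
Proof.
rewrite /cyclic_perm; split => [/eqP/cards1P [X porbitsE] x | a_conn].
  have : porbit s x \in porbits s by apply: imset_f.
  have : porbit s a \in porbits s by apply: imset_f.
  rewrite porbitsE !in_set1 => /eqP a_orbit /eqP x_orbit.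
  by rewrite fconnect_porbit a_orbit -x_orbit porbit_id.
apply/eqP/cards1P; exists (porbit s a); apply/setP => X; rewrite in_set1.
apply/imsetP/eqP => [[x _ ->] | ->]; last by exists a.
by apply/eqP; rewrite eq_porbit_mem -fconnect_porbit.
Qed.

Lemma fconnect_fixed (T : finType) (f : T -> T) x y :
  f x = x -> fconnect f x y -> y = x.
Proof. by move=> fx /iter_findex <-; apply: iter_fix. Qed.

Lemma hat_head_max n (s : {perm 'I_n.+1}) :
  nth 0 (hat s) 0 = n.+1 -> forall x, fconnect s ord_max x.
Proof.
rewrite /hat; set L := [seq m <- _ | _] => head_hat x.
have [m xm m_max] := @arg_maxnP _ x (fconnect s x) val (connect0 _ x).
have mL : m \in L.
  rewrite mem_filter mem_enum andbT; apply/forallP => j; apply/implyP => mj.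
  exact/m_max/(connect_trans xm mj).
have lt_trans : transitive (fun a b : 'I_n.+1 => a < b) := fun y x z => @ltn_trans y x z.
have L_sorted : sorted (fun a b : 'I_n.+1 => a < b) L.
  apply: sorted_filter => //.
  have : sorted ltn (map val (enum 'I_n.+1)) by rewrite val_enum_ord iota_ltn_sorted.
  by rewrite sorted_map.
case: L => [//|m0 L'] in head_hat mL L_sorted.
have m0_max : val m0 = n by move: head_hat; rewrite /= /cycle_of -orderSpred => -[].
have -> : ord_max = m.
  apply/val_inj; move: mL; rewrite inE => /orP [/eqP -> //| mL'].
  have /allP/(_ m mL') := order_path_min lt_trans L_sorted.
  by rewrite m0_max ltnNge -ltnS ltn_ord.
by rewrite fconnect_sym //; exact: perm_inj.
Qed.

Section Pattern321.

Variable n : nat.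
Implicit Type s : {perm 'I_n}.

Definition perm321 s :=
  exists i j k : 'I_n, [/\ i < j, j < k & s k < s j < s i].

Definition excedance_inversion s :=
  exists x y : 'I_n, [/\ x < y, x < s x, y < s y & s y < s x].

Definition deficiency_inversion s :=
  exists x y : 'I_n, [/\ x < y, s x < x, s y < y & s y < s x].

Lemma oneline_321P s : contains321 (oneline s) <-> perm321 s.
Proof.
have nth_oneline (i : 'I_n) : nth 0 (oneline s) i = (s i).+1.
  by rewrite (nth_map i) ?size_enum_ord // nth_ord_enum.
split => [[i [j [k [ij jk lt_k_n]]]] | [i [j [k [ij jk]]]]].
  rewrite size_map size_enum_ord in lt_k_n.
  have lt_j_n := ltn_trans jk lt_k_n; have lt_i_n := ltn_trans ij lt_j_n.
  rewrite (nth_oneline (Ordinal lt_i_n)) (nth_oneline (Ordinal lt_j_n)).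
  rewrite (nth_oneline (Ordinal lt_k_n)) !ltnS.
  by exists (Ordinal lt_i_n), (Ordinal lt_j_n), (Ordinal lt_k_n).
by exists i, j, k; rewrite size_map size_enum_ord ltn_ord !nth_oneline !ltnS.
Qed.

Lemma excedance_inversion_321 s : excedance_inversion s -> perm321 s.
Proof.
move=> [x [y [xy x_exc y_exc syx]]].
have [/existsP [k /andP [yk sky]] | /existsPn no_k] :=
  boolP [exists k : 'I_n, (y < k) && (s k < s y)].
  by exists x, y, k; rewrite xy yk sky syx.
(* Otherwise [s] maps [x |: Y] injectively into [B], which misses [s y \in Y]. *)
pose Y := [set k : 'I_n | y < k]; pose B := [set v : 'I_n | s y < v].
have sY_B : s @: (x |: Y) \subset B.
  apply/subsetP => _ /imsetP [k /setU1P k_xY ->]; rewrite inE.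
  case: k_xY => [-> // | ]; rewrite inE => yk.
  have := no_k k; rewrite yk /= -leqNgt leq_eqVlt => /predU1P [] // sky.
  by move: yk; rewrite (perm_inj (val_inj sky)) ltnn.
have B_Y : B \proper Y.
  apply/properP; split; last by exists (s y); rewrite !inE ?ltnn.
  by apply/subsetP => v; rewrite !inE; apply: ltn_trans.
have := leq_ltn_trans (subset_leq_card sY_B) (proper_card B_Y).
rewrite card_imset; last exact: perm_inj.
by rewrite cardsU1 inE -leqNgt (ltnW xy) add1n ltnNge leqnSn.
Qed.

Lemma perm321V s : perm321 (s^-1)%g -> perm321 s.
Proof.
move=> [i [j [k [ij jk /andP [kj ji]]]]].
by exists ((s^-1)%g k), ((s^-1)%g j), ((s^-1)%g i); rewrite !permKV kj ji jk ij.
Qed.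

Lemma deficiency_inversion_321 s : deficiency_inversion s -> perm321 s.
Proof.
move=> [x [y [xy x_def y_def syx]]]; apply/perm321V/excedance_inversion_321.
by exists (s y), (s x); rewrite !permK.
Qed.

Lemma perm321_inversion s (i j k : 'I_n) :
  i < j -> j < k -> s k < s j < s i -> s j != j ->
  excedance_inversion s \/ deficiency_inversion s.
Proof.
move=> ij jk /andP [kj ji] sjNj.
case: (ltngtP (s j) j) => [sjj | jsj | /val_inj sjj]; last by rewrite sjj eqxx in sjNj.
  by right; exists j, k; split; rewrite // (ltn_trans kj) // (ltn_trans sjj).
by left; exists i, j; split; rewrite // (ltn_trans ij) // (ltn_trans jsj).
Qed.

End Pattern321.

Lemma ltn_ord_max n (z : 'I_n.+1) : (z < n) = (z != ord_max).
Proof. by rewrite -val_eqE ltn_neqAle -ltnS ltn_ord andbT. Qed.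

Lemma ltn_ord_neq n (x y : 'I_n) : x < y -> x != y.
Proof. by apply: contraTneq => ->; rewrite ltnn. Qed.

Section CyclicHat.

Variables (n : nat) (s : {perm 'I_n.+1}).
Hypothesis s_cyclic : forall x, fconnect s ord_max x.

Local Notation pos := (findex s ord_max).

Lemma order_cyclic : fingraph.order s ord_max = n.+1.
Proof.
rewrite /fingraph.order -[RHS](card_ord n.+1); apply: eq_card => x.
by rewrite inE s_cyclic.
Qed.

Lemma fconnect_cyclic x y : fconnect s x y.
Proof.
apply: (connect_trans _ (s_cyclic y)).
by rewrite fconnect_sym ?s_cyclic //; exact: perm_inj.
Qed.

Lemma cycle_max_cyclic m : cycle_max s m = (m == ord_max).
Proof.
apply/forallP/eqP => [/(_ ord_max) | -> j]; last by rewrite -ltnS ltn_ord implybT.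
rewrite fconnect_sym ?s_cyclic //=; last exact: perm_inj.
by move=> le_n_m; apply/val_inj/eqP; rewrite eqn_leq le_n_m -ltnS ltn_ord.
Qed.

Lemma hat_cyclic : hat s = [seq (val x).+1 | x <- traject s ord_max n.+1].
Proof.
rewrite /hat; have -> : [seq m <- enum 'I_n.+1 | cycle_max s m] = [:: ord_max].
  rewrite (eq_filter cycle_max_cyclic (enum _)).
  exact: (filter_pred1_uniq (enum_uniq 'I_n.+1) (mem_enum _ ord_max)).
by rewrite /= cats0 /cycle_of order_cyclic.
Qed.

Lemma size_hat_cyclic : size (hat s) = n.+1.
Proof. by rewrite hat_cyclic size_map size_traject. Qed.

Lemma nth_hat_cyclic i : i < n.+1 -> nth 0 (hat s) i = (iter i s ord_max).+1.
Proof.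
by move=> lt_i_n; rewrite hat_cyclic (nth_map ord_max) ?size_traject ?nth_traject.
Qed.

Lemma iter_findex_cyclic x : iter (pos x) s ord_max = x.
Proof. exact: iter_findex. Qed.

Lemma findex_cyclic_max x : pos x < n.+1.
Proof. by have := findex_max (s_cyclic x); rewrite order_cyclic. Qed.

Lemma findex_cyclic_inj : injective pos.
Proof. by move=> x y eq_pos; rewrite -(iter_findex_cyclic x) eq_pos iter_findex_cyclic. Qed.

Lemma iter_last_cyclic : iter n s ord_max = (s^-1)%g ord_max.
Proof.
apply: (canRL (permK s)).
by have := iter_order (@perm_inj _ s) ord_max; rewrite order_cyclic.
Qed.

Lemma findex_cyclic_lt x : s x != ord_max -> pos x < n.
Proof.
have := findex_cyclic_max x; rewrite ltnS leq_eqVlt => /predU1P [pos_n|//].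
by rewrite -(iter_findex_cyclic x) pos_n iter_last_cyclic permKV eqxx.
Qed.

Lemma nth_hat_findex x : nth 0 (hat s) (pos x) = (val x).+1.
Proof.
by rewrite nth_hat_cyclic ?iter_findex_cyclic ?findex_cyclic_max.
Qed.

Lemma nth_hat_findexS x : s x != ord_max -> nth 0 (hat s) (pos x).+1 = (val (s x)).+1.
Proof.
by move=> /findex_cyclic_lt lt_pos_n; rewrite nth_hat_cyclic // iterS iter_findex_cyclic.
Qed.

Lemma hat_vinc_arcs P : contains_vinc P (hat s) ->
  exists x y : 'I_n.+1, P (val x).+1 (val (s x)).+1 (val y).+1 (val (s y)).+1.
Proof.
move=> [i [j [ij lt_j1 Pij]]]; rewrite size_hat_cyclic in lt_j1.
exists (iter i s ord_max), (iter j s ord_max).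
by rewrite -!iterS -!nth_hat_cyclic //; lia.
Qed.

Lemma arcs_hat_vinc P x y :
  s x != ord_max -> s y != ord_max -> x != y -> s x != y -> s y != x ->
  P (val x).+1 (val (s x)).+1 (val y).+1 (val (s y)).+1 ->
  contains_vinc P (hat s) \/ contains_vinc (fun a b c d => P c d a b) (hat s).
Proof.
move=> sx_max sy_max xy sxy syx Pxy.
have pos_succ z w : s z != w -> pos w != (pos z).+1.
  apply: contra => /eqP pos_w.
  by rewrite -(iter_findex_cyclic w) pos_w iterS iter_findex_cyclic.
have := findex_cyclic_lt sx_max; have := findex_cyclic_lt sy_max.
have := pos_succ _ _ sxy; have := pos_succ _ _ syx.
case: (ltngtP (pos x) (pos y)) => [lt_xy | lt_yx | /findex_cyclic_inj eq_xy];
  last by rewrite eq_xy eqxx in xy.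
  left; exists (pos x), (pos y).
  by rewrite size_hat_cyclic !nth_hat_findex !nth_hat_findexS //; split => //; lia.
right; exists (pos y), (pos x).
by rewrite size_hat_cyclic !nth_hat_findex !nth_hat_findexS //; split => //; lia.
Qed.

Lemma hat_231P :
  contains_231 (hat s) <-> exists y : 'I_n.+1, (s^-1)%g ord_max < y < s y.
Proof.
have last_hat : nth 0 (hat s) (size (hat s)).-1 = ((s^-1)%g ord_max).+1.
  by rewrite size_hat_cyclic nth_hat_cyclic // iter_last_cyclic.
rewrite /contains_231 last_hat size_hat_cyclic.
split => [[i [lt_i2]] | [y /andP [sVmax_y y_exc]]].
  by rewrite !nth_hat_cyclic ?ltnS; [exists (iter i s ord_max) | lia..].
have sy_max : s y != ord_max.
  by apply: contraTneq sVmax_y => <-; rewrite permK ltnn.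
have pos_y_lt := findex_cyclic_lt sy_max.
have pos_y_last : (pos y).+1 != n.
  apply: contraTneq y_exc => pos_y.
  rewrite -(iter_findex_cyclic y) -iterS pos_y iter_last_cyclic iter_findex_cyclic.
  by rewrite -leqNgt ltnW.
exists (pos y); rewrite nth_hat_findex nth_hat_findexS // !ltnS sVmax_y y_exc.
by split => //; lia.
Qed.

Lemma deficiency_inversion_hat :
  deficiency_inversion s <-> contains_3241 (hat s) \/ contains_4132 (hat s).
Proof.
split => [[x [y [xy x_def y_def syx]]] | ].
  have sx_max : s x != ord_max by rewrite -ltn_ord_max (leq_trans x_def) // -ltnS.
  have sy_max : s y != ord_max by rewrite -ltn_ord_max (leq_trans y_def) // -ltnS.
  have sx_y := ltn_ord_neq (ltn_trans x_def xy).
  have sy_x := ltn_ord_neq (ltn_trans syx x_def).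
  exact: (arcs_hat_vinc sx_max sy_max (ltn_ord_neq xy) sx_y sy_x
                        (conj syx (conj x_def xy))).
case=> [/hat_vinc_arcs [x [y]] | /hat_vinc_arcs [y [x]]];
  rewrite !ltnS => -[syx [x_def xy]];
  by exists x, y; rewrite xy x_def syx (ltn_trans syx) ?(ltn_trans x_def).
Qed.

Lemma excedance_inversion_hat : excedance_inversion s <->
  [\/ contains_1423 (hat s), contains_2314 (hat s) | contains_231 (hat s)].
Proof.
split => [[x [y [xy x_exc y_exc syx]]] | ].
  have [sx_max | sx_max] := eqVneq (s x) ord_max.
    by apply/Or33/hat_231P; exists y; rewrite -sx_max permK xy y_exc.
  have sy_max : s y != ord_max by rewrite -ltn_ord_max (leq_trans syx) // -ltnS.
  have sx_y : s x != y by rewrite eq_sym ltn_ord_neq // (ltn_trans y_exc).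
  have sy_x : s y != x by rewrite eq_sym ltn_ord_neq // (ltn_trans xy).
  have [] := arcs_hat_vinc (P := fun a b c d => a < c /\ c < d /\ d < b)
    sx_max sy_max (ltn_ord_neq xy) sx_y sy_x (conj xy (conj y_exc syx)).
    by move=> ?; apply: Or31.
  by move=> ?; apply: Or32.
case=> [/hat_vinc_arcs [x [y]] | /hat_vinc_arcs [y [x]] | /hat_231P [y /andP [xy y_exc]]].
1,2: rewrite !ltnS => -[xy [y_exc syx]];
  by exists x, y; rewrite xy y_exc syx (ltn_trans xy) ?(ltn_trans y_exc).
have sy_max : s y != ord_max by apply: contraTneq xy => <-; rewrite permK ltnn.
exists ((s^-1)%g ord_max), y; rewrite permKV xy y_exc; split => //.
  exact: leq_trans xy (leq_ord y).
by rewrite -ltn_ord_max in sy_max.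
Qed.

End CyclicHat.

Theorem mainTheorem1 (n : nat) (hn : 1 <= n) (s : {perm 'I_n}) :
  (cyclic_perm s /\ ~ contains321 (oneline s)) <->
  (nth 0 (hat s) 0 = n /\
   [/\ ~ contains_3241 (hat s),
       ~ contains_1423 (hat s),
       ~ contains_4132 (hat s),
       ~ contains_2314 (hat s) &
       ~ contains_231 (hat s)]).
Proof.
case: n hn s => [//|n] _ s.
split=> [[/(cyclic_permP s ord_max) s_cyc /oneline_321P s_avoids] |
         [head_hat no_patterns]].
  have no_def : ~ (contains_3241 (hat s) \/ contains_4132 (hat s)).
    by move/(deficiency_inversion_hat s_cyc)/deficiency_inversion_321.
  have no_exc : ~ [\/ contains_1423 (hat s), contains_2314 (hat s) | contains_231 (hat s)].
    by move/(excedance_inversion_hat s_cyc)/excedance_inversion_321.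
  rewrite nth_hat_cyclic //; split => //.
  split => p; [exact: no_def (or_introl p) | exact: no_exc (Or31 _ _ p) |
               exact: no_def (or_intror p) | exact: no_exc (Or32 _ _ p) |
               exact: no_exc (Or33 _ _ p)].
have s_cyc := hat_head_max head_hat.
split; first exact/(cyclic_permP s ord_max).
move/oneline_321P => [i [j [k [ij jk kji]]]].
have sjNj : s j != j.
  apply/eqP => /fconnect_fixed/(_ (fconnect_cyclic s_cyc j i)) ij_eq.
  by rewrite ij_eq ltnn in ij.
case: no_patterns => no_3241 no_1423 no_4132 no_2314 no_231.
case: (perm321_inversion ij jk kji sjNj) =>
  [/(excedance_inversion_hat s_cyc) [] | /(deficiency_inversion_hat s_cyc) []].
- exact: no_1423.
- exact: no_2314.
- exact: no_231.
- exact: no_3241.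
- exact: no_4132.
Qed.
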